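(* Let $I\subset\mathbb R$ be an interval. (i) Let $f:I\to\mathbb R$ be $\mathcal G$-convex, $g\in\mathcal G$, and $t_1<t_2$ in $I$ with $g(t_i)=f(t_i)$ for $i=1,2$. Then $g(t)\ge f(t)$ for all $t\in[t_1,t_2]$ and $g(t)\le f(t)$ for all $t\in I\setminus[t_1,t_2]$. (ii) Let $f:I\to\mathbb R$ be such that for all $t_1<t_2$ in $I$ there is $g\in\mathcal G$ with $g(t_i)=f(t_i)$, $i=1,2$, and $g(t)\ge f(t)$ for all $t\in[t_1,t_2]$. Then the right derivative of $f$ exists on $I\setminus\{\sup I\}$ and the left derivative on $I\setminus\{\inf I\}$; moreover, for every $t_0\in I$ and every $v_0\in\partial^{\pm}f(t_0)$, the function $$s\mapsto\sqrt{f(t_0)^2+2(s-t_0)f(t_0)v_0+(s-t_0)^2}$$ belongs to $\mathcal G$ and is a $\mathcal G$-tangent of $f$ at $t_0$. In particular, $f$ is $\mathcal G$-convex.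
   Context: $\mathcal G:=\{t\mapsto\sqrt{(t-t_0)^2+h^2}:\ t_0\in\mathbb R,\ h\ge0\}$. A function $f:I\to\mathbb R$ is $\mathcal G$-convex if for every $t_0\in I$ there is $g\in\mathcal G$ (called a $\mathcal G$-tangent of $f$ at $t_0$) with $g(t_0)=f(t_0)$ and $g(s)\le f(s)$ for all $s\in I$. With $f^{\oplus}$, $f^{\ominus}$ the right and left derivatives: for $t$ in the interior of $I$, $\partial^{\pm}f(t):=[\min(f^{\ominus}(t),f^{\oplus}(t)),\max(f^{\ominus}(t),f^{\oplus}(t))]$; if $\inf I\in I$ then $\partial^{\pm}f(\inf I):=\{f^{\oplus}(\inf I)\}$; if $\sup I\in I$ then $\partial^{\pm}f(\sup I):=\{f^{\ominus}(\sup I)\}$. *)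

From HB Require Import structures.
From mathcomp Require Import all_boot all_order all_algebra.
From mathcomp Require Import all_classical all_reals all_analysis.
Set Implicit Arguments. Unset Strict Implicit. Unset Printing Implicit Defensive.
Import Order.TTheory GRing.Theory Num.Theory.
Import numFieldNormedType.Exports.
Local Open Scope classical_set_scope.
Local Open Scope ring_scope.

Definition Gfun {R : realType} (t0 h : R) : R -> R :=
  fun t => Num.sqrt ((t - t0) ^+ 2 + h ^+ 2).

Definition inG {R : realType} (g : R -> R) : Prop :=
  exists t0 h : R, 0 <= h /\ g = Gfun t0 h.

Definition G_tangent {R : realType} (I : set R) (f : R -> R) (t0 : R)
    (g : R -> R) : Prop :=
  inG g /\ g t0 = f t0 /\ (forall s, I s -> g s <= f s).

Definition G_convex {R : realType} (I : set R) (f : R -> R) : Prop :=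
  forall t0, I t0 -> exists g, G_tangent I f t0 g.

Definition right_deriv {R : realType} (f : R -> R) (t l : R) : Prop :=
  (fun s => (f s - f t) / (s - t)) @ t^'+ --> l.
Definition left_deriv {R : realType} (f : R -> R) (t l : R) : Prop :=
  (fun s => (f s - f t) / (s - t)) @ t^'- --> l.

(* t is not the supremum (resp. infimum) of I, i.e. I has points to its right
   (resp. left). For t in I: t <> sup I iff has_right, t <> inf I iff has_left. *)
Definition has_right {R : realType} (I : set R) (t : R) : Prop :=
  exists b, I b /\ t < b.
Definition has_left {R : realType} (I : set R) (t : R) : Prop :=
  exists a, I a /\ a < t.

Definition pm_subdiff {R : realType} (I : set R) (f : R -> R) (t0 v : R) : Prop :=
  [/\ I t0,
      has_left I t0 -> has_right I t0 ->
        exists lm lp, [/\ left_deriv f t0 lm, right_deriv f t0 lp &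
                          Num.min lm lp <= v <= Num.max lm lp],
      ~ has_left I t0 -> right_deriv f t0 v
    & ~ has_right I t0 -> left_deriv f t0 v].

Definition tangent_cand {R : realType} (f : R -> R) (t0 v0 : R) : R -> R :=
  fun s => Num.sqrt (f t0 ^+ 2 + 2 * (s - t0) * f t0 * v0 + (s - t0) ^+ 2).

From HB Require Import structures.
From mathcomp Require Import all_boot all_order all_algebra.
From mathcomp Require Import all_classical all_reals all_analysis.
From mathcomp Require Import ring lra.
Import Order.TTheory GRing.Theory Num.Theory.
Import numFieldNormedType.Exports.
Local Open Scope classical_set_scope.
Local Open Scope ring_scope.

Set Implicit Arguments.
Unset Strict Implicit.

(* Every [g] in G is nonnegative and [g s ^+ 2 - s ^+ 2] is affine in [s], so two
   members of G cross at most once; this gives (i).  Under the hypothesis of (ii),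
   [f] is nonnegative and 1-Lipschitz, and [sqrBid f = f ^+ 2 - id ^+ 2] lies below
   its chords, i.e. is convex.  Convexity gives one-sided derivatives and supporting
   lines of [sqrBid f]; they transfer to [f = sqrt (sqrBid f + id ^+ 2)], and a
   supporting line of slope [2 f(t0) v0 - 2 t0] says exactly that [tangent_cand f t0 v0]
   lies below [f].  Left derivatives reduce to right ones under [s |-> - s]. *)

Section Gfun.
Context {R : realType}.
Implicit Types c h x y : R.

Lemma Gfun_ge0 c h x : 0 <= Gfun c h x.
Proof. exact: sqrtr_ge0. Qed.

Lemma Gfun_sqr c h x : Gfun c h x ^+ 2 = (x - c) ^+ 2 + h ^+ 2.
Proof. by rewrite /Gfun sqr_sqrtr // addr_ge0 // sqr_ge0. Qed.

Lemma ler_Gfun c h c' h' x y :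
  (Gfun c h x <= Gfun c' h' y) = ((x - c) ^+ 2 + h ^+ 2 <= (y - c') ^+ 2 + h' ^+ 2).
Proof. by rewrite /Gfun ler_sqrt // addr_ge0 // sqr_ge0. Qed.

Lemma Gfun_opp c h x : Gfun (- c) h x = Gfun c h (- x).
Proof. by rewrite /Gfun -opprD sqrrN opprK. Qed.

(* Cauchy-Schwarz: [((x - c) (y - c) + h ^+ 2) ^+ 2 <= Gfun c h x ^+ 2 * Gfun c h y ^+ 2]. *)
Lemma Gfun_subr_le_dist c h x y : Gfun c h y - Gfun c h x <= `|y - x|.
Proof.
have A0 := Gfun_ge0 c h y; have B0 := Gfun_ge0 c h x.
have A2 := Gfun_sqr c h y; have B2 := Gfun_sqr c h x.
set A := Gfun c h y in A0 A2 *; set B := Gfun c h x in B0 B2 *.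
have AB : (x - c) * (y - c) + h ^+ 2 <= A * B.
  have CS : ((x - c) * (y - c) + h ^+ 2) ^+ 2 <= (A * B) ^+ 2.
    rewrite exprMn A2 B2 -subr_ge0.
    have -> : ((y - c) ^+ 2 + h ^+ 2) * ((x - c) ^+ 2 + h ^+ 2) -
      ((x - c) * (y - c) + h ^+ 2) ^+ 2 = (h * (x - y)) ^+ 2 by ring.
    exact: sqr_ge0.
  have : 0 <= A * B by apply: mulr_ge0.
  nra.
have d2 : `|y - x| ^+ 2 = (y - x) ^+ 2 by rewrite real_normK // num_real.
have : 0 <= `|y - x| by [].
nra.
Qed.

Lemma Gfun_le_between c h c' h' t1 t t2 : t1 <= t <= t2 ->
  Gfun c' h' t1 <= Gfun c h t1 -> Gfun c' h' t2 <= Gfun c h t2 ->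
  Gfun c' h' t <= Gfun c h t.
Proof.
rewrite !ler_Gfun => /andP[t1t tt2] le1 le2.
have [<-|t1Nt] := eqVneq t1 t; first by [].
have : 0 <= (t2 - t) * ((t1 - c) ^+ 2 + h ^+ 2 - ((t1 - c') ^+ 2 + h' ^+ 2)).
  by rewrite mulr_ge0 // subr_ge0.
have : 0 <= (t - t1) * ((t2 - c) ^+ 2 + h ^+ 2 - ((t2 - c') ^+ 2 + h' ^+ 2)).
  by rewrite mulr_ge0 // subr_ge0.
nra.
Qed.

Lemma Gfun_le_left c h c' h' t t1 t2 : t <= t1 < t2 ->
  Gfun c h t1 <= Gfun c' h' t1 -> Gfun c' h' t2 <= Gfun c h t2 ->
  Gfun c h t <= Gfun c' h' t.
Proof. by move=> /andP[? ?]; rewrite !ler_Gfun => ? ?; nra. Qed.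

Lemma Gfun_le_right c h c' h' t1 t2 t : t1 < t2 <= t ->
  Gfun c h t2 <= Gfun c' h' t2 -> Gfun c' h' t1 <= Gfun c h t1 ->
  Gfun c h t <= Gfun c' h' t.
Proof. by move=> /andP[? ?]; rewrite !ler_Gfun => ? ?; nra. Qed.

End Gfun.

Lemma G_convex_secant {R : realType} (I : set R) (f g : R -> R) (t1 t2 : R) :
  is_interval I -> G_convex I f -> inG g -> I t1 -> I t2 -> t1 < t2 ->
  g t1 = f t1 -> g t2 = f t2 ->
  (forall t, t1 <= t <= t2 -> f t <= g t) /\
  (forall t, I t -> ~ (t1 <= t <= t2) -> g t <= f t).
Proof.
move=> hI fc [c [h [_ ->]]] I1 I2 lt12 e1 e2; split.
  move=> t t12; have It : I t by apply: (hI t1 t2).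
  have [_ [[c' [h' [_ ->]]] [<- le]]] := fc t It.
  by apply: Gfun_le_between t12 _ _; rewrite ?e1 ?e2 le.
move=> t It nt; have [lt1|ge1] := ltrP t t1.
  have [_ [[c' [h' [_ ->]]] [e le]]] := fc t1 I1.
  apply: le_trans (le t It); apply: (@Gfun_le_left _ _ _ _ _ t t1 t2).
  - by rewrite (ltW lt1) lt12.
  - by rewrite e e1.
  - by rewrite e2 le.
have lt2 : t2 < t by rewrite ltNge; apply/negP => b; apply: nt; rewrite ge1 b.
have [_ [[c' [h' [_ ->]]] [e le]]] := fc t2 I2.
apply: le_trans (le t It); apply: (@Gfun_le_right _ _ _ _ _ t1 t2 t).
- by rewrite lt12 (ltW lt2).
- by rewrite e e2.
- by rewrite e1 le.
Qed.

Definition secant_dominated {R : realType} (I : set R) (f : R -> R) : Prop :=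
  forall t1 t2, I t1 -> I t2 -> t1 < t2 ->
    exists g, [/\ inG g, g t1 = f t1, g t2 = f t2 &
                  forall t, t1 <= t <= t2 -> f t <= g t].

Definition sqrBid {F : fieldType} (f : F -> F) (t : F) : F := f t ^+ 2 - t ^+ 2.

Definition slope {F : fieldType} (f : F -> F) (t s : F) : F := (f s - f t) / (s - t).

Lemma slopeC {F : fieldType} (f : F -> F) (t s : F) : slope f t s = slope f s t.
Proof. by rewrite /slope -opprB -(opprB t) invrN mulrNN. Qed.

Lemma slope_sqrBid {F : fieldType} (f : F -> F) (t s : F) : s != t ->
  slope (sqrBid f) t s = slope f t s * (f s + f t) - (s + t).
Proof.
by move=> st; rewrite /slope /sqrBid; field; rewrite subr_eq0.
Qed.

(* [tangent_cand f t v s ^+ 2 - s ^+ 2] is the affine function of [s] below, so the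
   second clause says that [tangent_cand f t v] lies below [f] on [I]; the first one
   makes it a member of G. *)
Definition Gtangent_slope {R : realType} (I : set R) (f : R -> R) (t v : R) : Prop :=
  -1 <= v <= 1 /\
  forall s, I s -> sqrBid f t + (2 * f t * v - 2 * t) * (s - t) <= sqrBid f s.

Lemma ler_pdiv2 {F : numFieldType} (a b x y : F) : 0 < a -> 0 < b ->
  (x / a <= y / b) = (x * b <= y * a).
Proof. by move=> a0 b0; rewrite ler_pdivrMr // mulrAC ler_pdivlMr. Qed.

Lemma cvg_near_eq {T : Type} {U : topologicalType} (F : set_system T) {FF : Filter F}
    (g1 g2 : T -> U) (l : U) :
  {near F, g1 =1 g2} -> g2 @ F --> l -> g1 @ F --> l.
Proof. by move=> E; apply: cvg_trans; apply: near_eq_cvg; apply: filterS E. Qed.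

Section SecantDominated.
Context {R : realType} (I : set R) (f : R -> R).
Hypotheses (hI : is_interval I) (Hf : secant_dominated I f).

Lemma in_interval a b x : I a -> I b -> a <= x -> x <= b -> I x.
Proof. by move=> Ia Ib ax xb; apply: (hI Ia Ib); rewrite ax xb. Qed.

Lemma secant_dominated_ge0 a b s : I a -> I b -> a < b -> I s -> 0 <= f s.
Proof.
have ends t1 t2 : I t1 -> I t2 -> t1 < t2 -> 0 <= f t1 /\ 0 <= f t2.
  move=> I1 I2 lt; have [_ [[c [h [_ ->]]] <- <- _]] := Hf I1 I2 lt.
  by rewrite !Gfun_ge0.
move=> Ia Ib ab Is; case: (ltrgtP s b) => [sb|bs|->].
- exact: (ends _ _ Is Ib sb).1.
- exact: (ends _ _ Ib Is bs).2.
- exact: (ends _ _ Ia Ib ab).2.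
Qed.

Lemma secant_dominated_lipschitz t1 t2 : I t1 -> I t2 -> t1 < t2 ->
  `|f t2 - f t1| <= t2 - t1.
Proof.
move=> I1 I2 lt; have [_ [[c [h [_ ->]]] <- <- _]] := Hf I1 I2 lt.
have := Gfun_subr_le_dist c h t1 t2; have := Gfun_subr_le_dist c h t2 t1.
rewrite distrC gtr0_norm ?subr_gt0 // => ? ?.
by rewrite ler_norml; apply/andP; split; lra.
Qed.

Lemma sqrBid_convex t1 t t2 : I t1 -> I t2 -> t1 < t -> t < t2 ->
  (sqrBid f t - sqrBid f t1) * (t2 - t1) <= (sqrBid f t2 - sqrBid f t1) * (t - t1).
Proof.
move=> I1 I2 lt1 lt2; have lt : t1 < t2 by apply: lt_trans lt2.
have It : I t := in_interval I1 I2 (ltW lt1) (ltW lt2).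
have ft0 : 0 <= f t := secant_dominated_ge0 I1 I2 lt It.
have [_ [[c [h [_ ->]]] e1 e2 le]] := Hf I1 I2 lt.
have fle : f t <= Gfun c h t by apply: le; rewrite !ltW.
have ft2 : f t ^+ 2 <= (t - c) ^+ 2 + h ^+ 2.
  by rewrite -Gfun_sqr ler_sqr // nnegrE Gfun_ge0.
have d0 : 0 <= t2 - t1 by rewrite subr_ge0 ltW.
have := ler_wpM2r d0 ft2.
by rewrite /sqrBid -e1 -e2 !Gfun_sqr; nra.
Qed.

Lemma slope_sqrBid_le t u v : I t -> I v -> t < u -> u < v ->
  slope (sqrBid f) t u <= slope (sqrBid f) t v.
Proof.
move=> It Iv tu uv; rewrite /slope ler_pdiv2 ?subr_gt0 //; last exact: lt_trans uv.
exact: sqrBid_convex.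
Qed.

Lemma slope_sqrBid_le_across s t u : I s -> I u -> s < t -> t < u ->
  slope (sqrBid f) t s <= slope (sqrBid f) t u.
Proof.
move=> Is Iu st tu; rewrite slopeC /slope ler_pdiv2 ?subr_gt0 //.
by have := sqrBid_convex Is Iu st tu; nra.
Qed.

(* If [f t = 0] then every secant member of G through [t] is [s |-> |s - t|]. *)
Lemma secant_dominated_eq0 t s : I t -> I s -> t < s -> f t = 0 -> f s = s - t.
Proof.
move=> It Is ts ft0; have [_ [[c [h [_ ->]]] e1 <- _]] := Hf It Is ts.
move: e1; rewrite ft0 => /eqP; rewrite /Gfun sqrtr_eq0 => hc.
have h2 : h ^+ 2 = 0.
  by apply/eqP; rewrite eq_le sqr_ge0 andbT; have := sqr_ge0 (t - c); lra.
have : (t - c) ^+ 2 = 0.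
  by apply/eqP; rewrite eq_le sqr_ge0 andbT; have := sqr_ge0 h; lra.
move/eqP; rewrite sqrf_eq0 subr_eq0 => /eqP <-.
by rewrite h2 addr0 sqrtr_sqr gtr0_norm // subr_gt0.
Qed.

Lemma near_right_in_interval t b : I t -> I b -> t < b ->
  \forall x \near t^'+, t < x /\ I x.
Proof.
move=> It Ib tb; near=> x; split; first by near: x; exact: nbhs_right_gt.
by apply: (in_interval It Ib); [apply: ltW|]; near: x;
  [exact: nbhs_right_gt | exact: nbhs_right_ltW].
Unshelve. all: by end_near. Qed.

Lemma secant_dominated_cvg_right t b : I t -> I b -> t < b -> f x @[x --> t^'+] --> f t.
Proof.
move=> It Ib tb; have nearI := near_right_in_interval It Ib tb.
apply/cvgrPdist_le => e e0; near=> x; have [tx Ix] : t < x /\ I x by near: x.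
have xe : x - t < e by near: x; exact: nbhs_right_ltDr.
rewrite distrC; apply: le_trans (ltW xe).
exact: secant_dominated_lipschitz Ix tx.
Unshelve. all: by end_near. Qed.

Lemma slope_sqrBid_right_cvg t b : I t -> I b -> t < b ->
  cvg (slope (sqrBid f) t x @[x --> t^'+]).
Proof.
move=> It Ib tb; have f0 := secant_dominated_ge0 It Ib tb.
have Iu u : u \in `]t, b[ -> t < u /\ I u.
  by rewrite in_itv /= => /andP[tu ub]; split; last exact: in_interval It Ib (ltW tu) (ltW ub).
apply: cvgP (nondecreasing_at_right_cvgr (b := BLeft b) _ _ _); first by rewrite bnd_simp.
- move=> u v /Iu[tu _] /Iu[tv Iv]; rewrite le_eqVlt => /predU1P[->//|uv].
  exact: slope_sqrBid_le.
- exists (- 2 * f t - 2 * b) => _ [u /= /[dup] /Iu[tu Iu'] + <-].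
  rewrite in_itv /= => /andP[_ ub].
  have := secant_dominated_lipschitz It Iu' tu; rewrite ler_norml => /andP[l1 l2].
  have fu0 := f0 u Iu'; have ft0 := f0 t It.
  have : 0 <= (f u - f t + (u - t)) * (f u + f t) by apply: mulr_ge0; lra.
  by rewrite /slope ler_pdivlMr ?subr_gt0 // /sqrBid; nra.
Qed.

Lemma secant_dominated_right_deriv t b : I t -> I b -> t < b ->
  exists l, right_deriv f t l.
Proof.
move=> It Ib tb; have f0 := secant_dominated_ge0 It Ib tb.
have nearI := near_right_in_interval It Ib tb.
have [ft0|ftn0] := eqVneq (f t) 0.
- exists 1; rewrite /right_deriv; apply: (@cvg_near_eq _ R _ _ _ (fun=> 1 : R)); last exact: cvg_cst.
  near=> x; have [tx Ix] : t < x /\ I x by near: x.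
  by rewrite /slope (secant_dominated_eq0 It Ix tx ft0) ft0 subr0 divff // subr_eq0 gt_eqF.
have ftp : 0 < f t by rewrite lt_neqAle eq_sym ftn0 f0.
exists ((lim (slope (sqrBid f) t x @[x --> t^'+]) + (t + t)) / (f t + f t)).
apply: (@cvg_near_eq _ _ _ _ _ (fun x => (slope (sqrBid f) t x + (x + t)) / (f x + f t))).
  near=> x; have [tx Ix] : t < x /\ I x by near: x.
  rewrite slope_sqrBid ?gt_eqF // addrNK mulfK // gt_eqF // ltr_wpDl //.
  exact: f0.
apply: cvgM; first apply: cvgD; first exact: slope_sqrBid_right_cvg It Ib tb.
- by apply: cvgD; [exact: cvg_at_right_filter cvg_id | exact: cvg_cst].
apply: cvgV; first by rewrite gt_eqF // addr_gt0.
by apply: cvgD; [exact: secant_dominated_cvg_right It Ib tb | exact: cvg_cst].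
Unshelve. all: by end_near. Qed.

Lemma right_deriv_slope_sqrBid t b l : I t -> I b -> t < b -> right_deriv f t l ->
  slope (sqrBid f) t x @[x --> t^'+] --> 2 * f t * l - 2 * t.
Proof.
move=> It Ib tb fl.
have -> : 2 * f t * l - 2 * t = l * (f t + f t) - (t + t) by ring.
apply: (@cvg_near_eq _ _ _ _ _ (fun x => slope f t x * (f x + f t) - (x + t))).
  by near=> x; rewrite slope_sqrBid // gt_eqF //; near: x; exact: nbhs_right_gt.
apply: cvgB; last by apply: cvgD; [exact: cvg_at_right_filter cvg_id | exact: cvg_cst].
apply: cvgM; first exact: fl.
by apply: cvgD; [exact: secant_dominated_cvg_right It Ib tb | exact: cvg_cst].
Unshelve. all: by end_near. Qed.

Lemma right_deriv_Gtangent_slope t b l : I t -> I b -> t < b -> right_deriv f t l ->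
  Gtangent_slope I f t l.
Proof.
move=> It Ib tb fl; have nearI := near_right_in_interval It Ib tb.
have Q := right_deriv_slope_sqrBid It Ib tb fl; split.
  rewrite -ler_norml; apply: (ler_cvg_to (cvg_norm fl) (cvg_cst _)).
  near=> x; have [tx Ix] : t < x /\ I x by near: x.
  rewrite /slope normrM normfV [`|x - t|]gtr0_norm ?subr_gt0 // ler_pdivrMr ?subr_gt0 //.
  by rewrite mul1r secant_dominated_lipschitz.
move=> s Is; case: (ltrgtP s t) => [st|ts|->]; last by rewrite subrr mulr0 addr0.
  have : slope (sqrBid f) t s <= 2 * f t * l - 2 * t.
    apply: (ler_cvg_to (cvg_cst _) Q); near=> u; have [tu Iu] : t < u /\ I u by near: u.
    exact: slope_sqrBid_le_across.
  by rewrite slopeC /slope ler_pdivrMr ?subr_gt0 //; nra.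
have : 2 * f t * l - 2 * t <= slope (sqrBid f) t s.
  apply: (ler_cvg_to Q (cvg_cst _)); near=> u.
  have tu : t < u by near: u; exact: nbhs_right_gt.
  have us : u < s by near: u; exact: nbhs_right_lt.
  exact: slope_sqrBid_le.
by rewrite /slope ler_pdivlMr ?subr_gt0 //; nra.
Unshelve. all: by end_near. Qed.

End SecantDominated.

Section Reflection.
Context {R : realType}.
Implicit Types (I : set R) (f : R -> R).

Lemma is_interval_opp I : is_interval I -> is_interval (-%R @^-1` I).
Proof.
move=> hI x y Ix Iy z /andP[xz zy] /=.
by apply: (hI _ _ Iy Ix); rewrite !lerN2 zy xz.
Qed.

Lemma preimage_opp_oppr I x : I x -> (-%R @^-1` I) (- x).
Proof. by rewrite /= opprK. Qed.

Lemma secant_dominated_opp I f :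
  secant_dominated I f -> secant_dominated (-%R @^-1` I) (f \o -%R).
Proof.
move=> Hf t1 t2 I1 I2 lt; have lt' : - t2 < - t1 by rewrite ltrN2.
have [_ [[c [h [h0 ->]]] e1 e2 le]] := Hf _ _ I2 I1 lt'.
exists (Gfun (- c) h); split => /=.
- by exists (- c), h.
- by rewrite Gfun_opp.
- by rewrite Gfun_opp.
- by move=> t /andP[a b]; rewrite Gfun_opp le // !lerN2 a b.
Qed.

Lemma left_deriv_opp f t l :
  left_deriv f t l <-> right_deriv (f \o -%R) (- t) (- l).
Proof.
rewrite /left_deriv /right_deriv cvg_at_leftNP -cvgNP.
have -> : - ((fun s => (f s - f t) / (s - t)) \o -%R) =
    (fun s => ((f \o -%R) s - (f \o -%R) (- t)) / (s - - t)).
  by apply/funext => s; rewrite opprfctE /= !opprK -mulrN -invrN opprB opprK [t + s]addrC.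
by [].
Qed.

Lemma sqrBid_opp f x : sqrBid (f \o -%R) x = sqrBid f (- x).
Proof. by rewrite /sqrBid /= sqrrN. Qed.

Lemma Gtangent_slope_opp I f t v :
  Gtangent_slope (-%R @^-1` I) (f \o -%R) (- t) (- v) -> Gtangent_slope I f t v.
Proof.
move=> [vb sup]; split; first by move: vb; rewrite lerNr opprK lerNl andbC.
move=> s Is; have := sup (- s); rewrite /= !opprK !sqrBid_opp !opprK => /(_ Is).
by apply: le_trans; rewrite le_eqVlt; apply/orP; left; apply/eqP; ring.
Qed.

End Reflection.

Lemma Gtangent_slope_between {R : realType} (I : set R) (f : R -> R) t a b v :
  0 <= f t -> Gtangent_slope I f t a -> Gtangent_slope I f t b ->
  Num.min a b <= v <= Num.max a b -> Gtangent_slope I f t v.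
Proof.
wlog ab : a b / a <= b.
  move=> wlog f0 ga gb; case/orP: (le_total a b) => [ab|ba].
    exact: wlog ab f0 ga gb.
  by rewrite minC maxC; exact: wlog ba f0 gb ga.
move=> f0 [/andP[a1 _] sa] [/andP[_ b1] sb]; rewrite (min_idPl ab) (max_idPr ab).
move=> /andP[av vb]; split; first by apply/andP; split; lra.
move=> s Is; have := sa s Is; have := sb s Is.
have [st|st] := lerP 0 (s - t).
  have : 0 <= f t * (b - v) * (s - t) by rewrite !mulr_ge0 // subr_ge0.
  nra.
have : 0 <= f t * (v - a) * (t - s) by rewrite !mulr_ge0 // subr_ge0 // ltW // -subr_lt0.
nra.
Qed.

Lemma tangent_cand_inG {R : realType} (f : R -> R) t v :
  0 <= f t -> -1 <= v <= 1 -> inG (tangent_cand f t v).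
Proof.
move=> f0 /andP[v1 v2]; exists (t - f t * v), (f t * Num.sqrt (1 - v ^+ 2)).
split; first by rewrite mulr_ge0 ?sqrtr_ge0.
apply/funext => s; rewrite /tangent_cand /Gfun; congr Num.sqrt.
rewrite exprMn sqr_sqrtr; last by nra.
ring.
Qed.

Lemma Gtangent_slope_G_tangent {R : realType} (I : set R) (f : R -> R) t v :
  (forall s, I s -> 0 <= f s) -> I t -> Gtangent_slope I f t v ->
  G_tangent I f t (tangent_cand f t v).
Proof.
move=> f0 It [v1 sup]; split; first exact: tangent_cand_inG (f0 t It) v1.
split.
  rewrite /tangent_cand subrr.
  have -> : f t ^+ 2 + 2 * 0 * f t * v + 0 ^+ 2 = f t ^+ 2 by ring.
  by rewrite sqrtr_sqr ger0_norm // f0.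
move=> s Is; have := sup s Is; rewrite /tangent_cand /sqrBid => le.
rewrite -[leRHS](ger0_norm (f0 s Is)) -sqrtr_sqr; apply: ler_wsqrtr; nra.
Qed.

Section LeftDerivative.
Context {R : realType} (I : set R) (f : R -> R).
Hypotheses (hI : is_interval I) (Hf : secant_dominated I f).

Lemma secant_dominated_left_deriv t a : I t -> I a -> a < t ->
  exists l, left_deriv f t l.
Proof.
move=> It Ia at'; have ta : - t < - a by rewrite ltrN2.
have [l fl] := secant_dominated_right_deriv (is_interval_opp hI)
  (secant_dominated_opp Hf) (preimage_opp_oppr It) (preimage_opp_oppr Ia) ta.
by exists (- l); apply/left_deriv_opp; rewrite opprK.
Qed.

Lemma left_deriv_Gtangent_slope t a l : I t -> I a -> a < t -> left_deriv f t l ->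
  Gtangent_slope I f t l.
Proof.
move=> It Ia at' /left_deriv_opp fl; apply: Gtangent_slope_opp.
have ta : - t < - a by rewrite ltrN2.
exact: (right_deriv_Gtangent_slope (is_interval_opp hI) (secant_dominated_opp Hf)
  (preimage_opp_oppr It) (preimage_opp_oppr Ia) ta fl).
Qed.

Lemma pm_subdiff_Gtangent_slope t v : (exists a b, I a /\ I b /\ a < b) ->
  pm_subdiff I f t v -> Gtangent_slope I f t v.
Proof.
move=> [a [b [Ia [Ib ab]]]] [It both onlyR onlyL].
have gR l : has_right I t -> right_deriv f t l -> Gtangent_slope I f t l.
  by move=> [c [Ic tc]] fl; exact: (right_deriv_Gtangent_slope hI Hf It Ic tc fl).
have gL l : has_left I t -> left_deriv f t l -> Gtangent_slope I f t l.
  by move=> [c [Ic ct]] fl; exact: (left_deriv_Gtangent_slope It Ic ct fl).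
have [hl|nhl] := pselect (has_left I t); have [hr|nhr] := pselect (has_right I t).
- have [lm [lp [dm dp mv]]] := both hl hr.
  exact: Gtangent_slope_between (secant_dominated_ge0 Hf Ia Ib ab It) (gL _ hl dm) (gR _ hr dp) mv.
- exact: gL hl (onlyL nhr).
- exact: gR hr (onlyR nhl).
- have [tb|bt] := ltrP t b; first by case: nhr; exists b.
  by case: nhl; exists a; split => //; apply: lt_le_trans bt.
Qed.

Lemma exists_Gtangent_slope t : (exists a b, I a /\ I b /\ a < b) -> I t ->
  exists v, Gtangent_slope I f t v.
Proof.
move=> [a [b [Ia [Ib ab]]]] It; have [tb|bt] := ltrP t b.
  have [l fl] := secant_dominated_right_deriv hI Hf It Ib tb.
  by exists l; exact: (right_deriv_Gtangent_slope hI Hf It Ib tb fl).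
have at' : a < t by apply: lt_le_trans bt.
have [l fl] := secant_dominated_left_deriv It Ia at'.
by exists l; exact: (left_deriv_Gtangent_slope It Ia at' fl).
Qed.

End LeftDerivative.

Unset Implicit Arguments.

Theorem mainTheorem16 (R : realType) (I : set R)
  (hI : is_interval I) (hnd : exists a b, I a /\ I b /\ a < b) :
  (forall (f g : R -> R) (t1 t2 : R),
     G_convex I f -> inG g -> I t1 -> I t2 -> t1 < t2 ->
     g t1 = f t1 -> g t2 = f t2 ->
     (forall t, t1 <= t <= t2 -> f t <= g t) /\
     (forall t, I t -> ~ (t1 <= t <= t2) -> g t <= f t)) /\
  (forall f : R -> R,
     (forall t1 t2, I t1 -> I t2 -> t1 < t2 ->
        exists g, [/\ inG g, g t1 = f t1, g t2 = f t2 &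
                      forall t, t1 <= t <= t2 -> f t <= g t]) ->
     [/\ (forall t, I t -> has_right I t -> exists l, right_deriv f t l),
         (forall t, I t -> has_left I t -> exists l, left_deriv f t l),
         (forall t0 v0, I t0 -> pm_subdiff I f t0 v0 ->
            inG (tangent_cand f t0 v0) /\ G_tangent I f t0 (tangent_cand f t0 v0))
       & G_convex I f]).
Proof.
split; first by move=> f g t1 t2; exact: G_convex_secant.
move=> f Hf; have [a [b [Ia [Ib ab]]]] := hnd.
have f0 s : I s -> 0 <= f s := secant_dominated_ge0 Hf Ia Ib ab.
split.
- by move=> t It [c [Ic tc]]; exact: (secant_dominated_right_deriv hI Hf It Ic tc).
- by move=> t It [c [Ic ct]]; exact: (secant_dominated_left_deriv hI Hf It Ic ct).
- move=> t v It /(pm_subdiff_Gtangent_slope hI Hf hnd) tv.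
  by have tg := Gtangent_slope_G_tangent f0 It tv; split; first exact: tg.1.
- move=> t It; have [v tv] := exists_Gtangent_slope hI Hf hnd It.
  by exists (tangent_cand f t v); exact: Gtangent_slope_G_tangent f0 It tv.
Qed.
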